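(* Let $f\in\mathcal{R}$ with $f(z)=z+\sum_{n=2}^\infty a_nz^n$ and local inverse $f^{-1}(w)=w+\sum_{n\ge2}A_nw^n$, so $A_2=-a_2$, $A_3=-a_3+2a_2^2$. Then \[ -\frac{1}{\sqrt3}\le|A_3|-|A_2|\le\frac23, \] and both inequalities are sharp.
   Context: $\mathbb{D}$ is the open unit disk; $\mathcal{A}$ is the class of holomorphic $f$ on $\mathbb{D}$ with $f(0)=0$, $f'(0)=1$; $\mathcal{R}=\{f\in\mathcal{A}:\operatorname{Re} f'(z)>0\ \forall z\in\mathbb{D}\}$. *)

From Stdlib Require Import Reals.
From Coquelicot Require Import Coquelicot.

Open Scope R_scope.

Definition in_unit_disk (z : C) : Prop := Cmod z < 1.

Definition cderiv (f : C -> C) (z l : C) : Prop :=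
  @is_derive C_AbsRing C_NormedModule f z l.

Definition holomorphic_on_disk (f : C -> C) : Prop :=
  forall z, in_unit_disk z -> exists l, cderiv f z l.

Definition classA (f : C -> C) : Prop :=
  holomorphic_on_disk f /\ f 0%R = 0%R /\ cderiv f 0%R 1%R.

Definition classR (f : C -> C) : Prop :=
  classA f /\
  forall z l, in_unit_disk z -> cderiv f z l -> 0 < Re l.

Definition taylor_coeffs (f : C -> C) (a : nat -> C) : Prop :=
  forall z, in_unit_disk z ->
    @is_series C_AbsRing C_NormedModule (fun n => (a n * z ^ n)%C) (f z).

(* coefficients of the local inverse f^{-1}(w) = w + sum A_n w^n *)
Definition invA2 (a : nat -> C) : C := (- a 2%nat)%C.
Definition invA3 (a : nat -> C) : C := (- a 3%nat + 2 * (a 2%nat) ^ 2)%C.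

From Stdlib Require Import Reals Lra Lia ClassicalEpsilon.
From Coquelicot Require Import Coquelicot.
Open Scope R_scope.

(* With c_n = (n + 1) a_(n + 1), the derivative p = f' = sum c_n z^n has positive real part and
   c_0 = 1.  Averaging a truncation of p(r z) against |v0 + v1 z + v2 z^2|^2 over the N-th roots
   of unity shows that the Toeplitz form of (c_0, c_1 r, c_2 r^2) is positive semidefinite, and a
   suitable test vector turns this into |c_2 - c_1^2/2| + |c_1|^2/2 <= 2 (let r -> 1).  As
   A_2 = -c_1/2 and A_3 = -(c_2 - c_1^2/2)/3 + (4/3) A_2^2, the modulus |A_3| lies within e/3 of
   (4/3)|A_2|^2, where e + 2|A_2|^2 <= 2, and an elementary optimisation in |A_2| gives both
   bounds.  They are attained by f' = al/(1 - z) + be/(1 + z) - 1 with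
   (al, be) = (1 + 1/sqrt 3, 1 - 1/sqrt 3) and (al, be) = (1, 1). *)

Notation is_Cseries := (@is_series C_AbsRing C_NormedModule).
Notation ex_Cseries := (@ex_series C_AbsRing C_NormedModule).

Lemma Cmod_series_le (x : nat -> C) (b : nat -> R) (X : C) (B : R) :
  is_Cseries x X -> is_series b B -> (forall n, Cmod (x n) <= b n) -> Cmod X <= B.
Proof.
  intros HX HB Hb.
  assert (Hpart : forall n, Cmod (@sum_n C_AbelianMonoid x n) <= sum_n b n).
  { induction n as [|n IH].
    - rewrite !sum_O. apply Hb.
    - rewrite !sum_Sn. eapply Rle_trans; [apply Cmod_triangle|].
      change (@plus R_AbelianMonoid (sum_n b n) (b (S n))) with (sum_n b n + b (S n)).
      specialize (Hb (S n)). lra. }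
  assert (Hlim : is_lim_seq (fun n => Cmod (@sum_n C_AbelianMonoid x n)) (Cmod X)).
  { eapply filterlim_comp; [exact HX|].
    apply (@filterlim_norm C_AbsRing C_NormedModule). }
  exact (is_lim_seq_le _ _ _ _ Hpart Hlim (HB : is_lim_seq (sum_n b) B)).
Qed.

Lemma ex_Cseries_le (x : nat -> C) (b : nat -> R) :
  (forall n, Cmod (x n) <= b n) -> ex_series b -> ex_Cseries x.
Proof. exact (@ex_series_le C_AbsRing C_CompleteNormedModule x b). Qed.

Lemma is_Cseries_unique (x : nat -> C) (L1 L2 : C) :
  is_Cseries x L1 -> is_Cseries x L2 -> L1 = L2.
Proof.
  exact (@filterlim_locally_unique nat C_AbsRing C_NormedModule eventually _ _ _ _).
Qed.

Lemma ex_Cseries_terms_bounded (x : nat -> C) :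
  ex_Cseries x -> exists M, 0 <= M /\ forall n, Cmod (x n) <= M.
Proof.
  intros Hx.
  destruct (@Cauchy_ex_series C_AbsRing C_CompleteNormedModule x Hx (mkposreal 1 Rlt_0_1))
    as [N HN].
  assert (Hprefix : exists M, forall n, (n < N)%nat -> Cmod (x n) <= M).
  { clear HN. induction N as [|N [M HM]].
    - exists 0. intros; lia.
    - exists (Rmax M (Cmod (x N))). intros n Hn.
      destruct (Nat.eq_dec n N) as [->|Hne]; [apply Rmax_r|].
      eapply Rle_trans; [apply HM; lia|apply Rmax_l]. }
  destruct Hprefix as [M HM].
  exists (Rmax 1 M). split; [eapply Rle_trans; [|apply Rmax_l]; lra|].
  intros n. destruct (Compare_dec.le_lt_dec N n) as [Hn|Hn].
  - eapply Rle_trans; [|apply Rmax_l].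
    specialize (HN n n Hn Hn). rewrite sum_n_n in HN. now left.
  - eapply Rle_trans; [apply HM, Hn|apply Rmax_r].
Qed.

Section Truncation.
Context {K : AbsRing} {V : NormedModule K}.

Lemma is_series_truncated (x : nat -> V) (M : nat) :
  is_series (fun k => if (k <=? M)%nat then x k else zero) (sum_n x M).
Proof.
  apply filterlim_ext_loc with (fun _ => sum_n x M); [|apply filterlim_const].
  exists M. intros n Hn.
  assert (Htrunc : forall n, sum_n (fun k => if (k <=? M)%nat then x k else zero) n
                          = sum_n x (Nat.min n M)).
  { clear n Hn. induction n as [|n IH].
    - rewrite Nat.min_0_l, !sum_O. reflexivity.
    - rewrite sum_Sn, IH. destruct (Nat.leb_spec (S n) M).
      + rewrite !Nat.min_l by lia. rewrite sum_Sn. reflexivity.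
      + rewrite !Nat.min_r by lia. apply plus_zero_r. }
  rewrite Htrunc, Nat.min_r by lia. reflexivity.
Qed.

Lemma is_series_tail (x : nat -> V) (L : V) (M : nat) : is_series x L ->
  is_series (fun k => if (k <=? M)%nat then zero else x k) (minus L (sum_n x M)).
Proof.
  intros H.
  eapply is_series_ext; [|exact (is_series_minus _ _ _ _ H (is_series_truncated x M))].
  intros n. simpl. destruct (n <=? M)%nat.
  - exact (@plus_opp_r (NormedModule.AbelianGroup K V) (x n)).
  - exact (@minus_zero_r (NormedModule.AbelianGroup K V) (x n)).
Qed.
End Truncation.

Lemma is_Cseries_at_0 (x : nat -> C) : is_Cseries (fun n => (x n * RtoC 0 ^ n)%C) (x 0%nat).
Proof.
  pose proof (@is_series_truncated C_AbsRing C_NormedModule x 0) as H.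
  rewrite sum_O in H. eapply is_series_ext; [|exact H].
  intros [|n]; simpl.
  - rewrite Cmult_1_r. reflexivity.
  - rewrite Cmult_0_l, Cmult_0_r. reflexivity.
Qed.

Lemma ex_series_sq_geom (q : R) : 0 < q < 1 -> ex_series (fun n => INR (S n) ^ 2 * q ^ n).
Proof.
  intros Hq.
  apply ex_series_Rabs, (ex_series_DAlembert _ q); [lra| |].
  - intros n. apply Rmult_integral_contrapositive. split.
    + apply pow_nonzero, not_0_INR. discriminate.
    + apply pow_nonzero. lra.
  - assert (Hinv : is_lim_seq (fun n => / INR (S n)) 0).
    { assert (H : is_lim_seq (fun n => INR (S n)) p_infty).
      { apply (is_lim_seq_incr_1 INR p_infty), is_lim_seq_INR. }
      exact (is_lim_seq_inv _ _ H ltac:(discriminate)). }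
    apply is_lim_seq_ext with (fun n => (1 + / INR (S n)) * (1 + / INR (S n)) * q).
    + intros n. assert (HS : 0 < INR (S n)) by (apply lt_0_INR; lia).
      rewrite (S_INR (S n)), Rabs_pos_eq.
      * rewrite <- (tech_pow_Rmult q n). field. split; [apply pow_nonzero|]; lra.
      * apply Rle_mult_inv_pos; [|apply Rmult_lt_0_compat; apply pow_lt; lra].
        apply Rmult_le_pos; apply pow_le; [pose proof (pos_INR (S n))|]; lra.
    + assert (L : is_lim_seq (fun n => (1 + / INR (S n)) * (1 + / INR (S n)) * q)
                              ((1 + 0) * (1 + 0) * q)).
      { apply is_lim_seq_mult'; [apply is_lim_seq_mult'|apply is_lim_seq_const];
          apply is_lim_seq_plus'; try apply is_lim_seq_const; exact Hinv. }
      now replace ((1 + 0) * (1 + 0) * q) with q in L by ring.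
Qed.

Lemma pow_remainder_le (z h : C) (rho : R) :
  1 / 2 <= rho -> Cmod z <= rho -> Cmod (z + h) <= rho -> forall n,
  Cmod ((z + h) ^ n - z ^ n - INR n * h * z ^ pred n)%C <= 2 * INR n ^ 2 * Cmod h ^ 2 * rho ^ n.
Proof.
  intros Hrho Hz Hzh n.
  assert (Hh : 0 <= Cmod h) by apply Cmod_ge_0.
  induction n as [|[|k] IH].
  - simpl. replace (1 - 1 - 0 * h * 1)%C with (RtoC 0) by ring. rewrite Cmod_0. lra.
  - simpl. replace ((z + h) * 1 - z * 1 - 1 * h * 1)%C with (RtoC 0) by ring.
    rewrite Cmod_0. nra.
  - assert (Hstep : ((z + h) ^ S (S k) - z ^ S (S k) - INR (S (S k)) * h * z ^ S k)%C =
      ((z + h) * ((z + h) ^ S k - z ^ S k - INR (S k) * h * z ^ k)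
       + INR (S k) * (h * h) * z ^ k)%C).
    { rewrite (S_INR (S k)), RtoC_plus, !Cpow_S. ring. }
    simpl pred in *. rewrite Hstep.
    eapply Rle_trans; [apply Cmod_triangle|].
    rewrite !Cmod_mult, Cmod_pow, !Cmod_R, Rabs_pos_eq by apply pos_INR.
    set (E := Cmod ((z + h) ^ S k - z ^ S k - INR (S k) * h * z ^ k)%C) in *.
    assert (HE : 0 <= E) by apply Cmod_ge_0.
    assert (Hrk : 0 <= rho ^ k) by (apply pow_le; lra).
    assert (Hzk : Cmod z ^ k <= rho ^ k)
      by (apply pow_incr; split; [apply Cmod_ge_0|lra]).
    assert (H1 : Cmod (z + h) * E <= rho * (2 * INR (S k) ^ 2 * Cmod h ^ 2 * rho ^ S k))
      by (apply Rmult_le_compat; auto; apply Cmod_ge_0).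
    assert (H2 : INR (S k) * (Cmod h * Cmod h) * Cmod z ^ k
                 <= INR (S k) * (Cmod h * Cmod h) * rho ^ k)
      by (apply Rmult_le_compat_l; auto; apply Rmult_le_pos; [apply pos_INR|nra]).
    eapply Rle_trans; [apply Rplus_le_compat; eauto|].
    rewrite (S_INR (S k)), <- !tech_pow_Rmult.
    set (x := INR (S k)). assert (0 <= x) by apply pos_INR.
    assert (Hw : 0 <= Cmod h * Cmod h * rho ^ k) by (apply Rmult_le_pos; nra).
    assert (Hr2 : 1 / 4 <= rho * rho) by nra.
    assert (F : 2 * x * x * rho * rho + x <= 2 * (x + 1) * (x + 1) * rho * rho) by nra.
    pose proof (Rmult_le_compat_l _ _ _ Hw F) as G.
    match goal with |- ?L <= ?R =>
      replace L with (Cmod h * Cmod h * rho ^ k * (2 * x * x * rho * rho + x)) by ring;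
      replace R with (Cmod h * Cmod h * rho ^ k * (2 * (x + 1) * (x + 1) * rho * rho)) by ring end.
    exact G.
Qed.

(* Abel's lemma: boundedness of the terms at radius (1 + rho)/2 gives geometric decay at rho. *)
Lemma power_series_coeffs_decay (a : nat -> C) :
  (forall z, Cmod z < 1 -> ex_Cseries (fun n => (a n * z ^ n)%C)) ->
  forall rho, 0 <= rho < 1 -> exists M q, 0 <= M /\ 0 < q < 1 /\ forall n,
    Cmod (a n) * rho ^ n <= M * q ^ n /\ Cmod (a (S n)) * rho ^ n <= 2 * M * q ^ n.
Proof.
  intros Hser rho Hrho.
  set (r := (1 + rho) / 2).
  assert (Hr : 1 / 2 <= r < 1) by (unfold r; lra).
  assert (Hrc : Cmod (RtoC r) < 1) by (rewrite Cmod_R, Rabs_pos_eq; lra).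
  destruct (ex_Cseries_terms_bounded _ (Hser _ Hrc)) as [M [HM0 HM]].
  set (q := (1 + rho / r) / 2).
  assert (Hq1 : rho / r < 1) by (apply Rlt_div_l; unfold r; lra).
  assert (Hq0 : 0 <= rho / r) by (apply Rle_mult_inv_pos; lra).
  assert (Hq : 0 < q < 1) by (unfold q; lra).
  exists M, q. split; [exact HM0|]. split; [exact Hq|].
  assert (Hpow : forall n, rho ^ n <= r ^ n * q ^ n).
  { intros n. rewrite <- Rpow_mult_distr. apply pow_incr. split; [lra|].
    unfold q. replace rho with (r * (rho / r)) at 1 by (field; lra).
    apply Rmult_le_compat_l; lra. }
  assert (Hbd : forall n, Cmod (a n) * r ^ n <= M).
  { intros n. specialize (HM n).
    now rewrite Cmod_mult, Cmod_pow, Cmod_R, Rabs_pos_eq in HM by lra. }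
  intros n.
  assert (Hqn : 0 <= q ^ n) by (apply pow_le; lra).
  assert (Hrn : 0 <= r ^ n) by (apply pow_le; lra).
  split.
  - eapply Rle_trans; [apply Rmult_le_compat_l; [apply Cmod_ge_0|apply Hpow]|].
    rewrite <- Rmult_assoc. apply Rmult_le_compat_r; [exact Hqn|apply Hbd].
  - eapply Rle_trans; [apply Rmult_le_compat_l; [apply Cmod_ge_0|apply Hpow]|].
    specialize (Hbd (S n)). simpl pow in Hbd.
    assert (Ha : 0 <= Cmod (a (S n))) by apply Cmod_ge_0.
    assert (Cmod (a (S n)) * r ^ n <= 2 * M) by (apply Rmult_le_reg_l with r; nra).
    rewrite <- Rmult_assoc. apply Rmult_le_compat_r; assumption.
Qed.

Definition deriv_coeffs (a : nat -> C) (n : nat) : C := (INR (S n) * a (S n))%C.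

Lemma taylor_coeffs_ex_series (f : C -> C) (a : nat -> C) : taylor_coeffs f a ->
  forall z, Cmod z < 1 -> ex_Cseries (fun n => (a n * z ^ n)%C).
Proof. intros H z Hz. exists (f z). exact (H z Hz). Qed.

Lemma deriv_coeffs_abs_summable (f : C -> C) (a : nat -> C) : taylor_coeffs f a ->
  forall r, 0 <= r < 1 -> ex_series (fun n => Cmod (deriv_coeffs a n) * r ^ n).
Proof.
  intros Hf r Hr.
  destruct (power_series_coeffs_decay a (taylor_coeffs_ex_series f a Hf) r Hr)
    as [M [q [HM [Hq Hb]]]].
  apply (@ex_series_le R_AbsRing R_CompleteNormedModule)
    with (fun n => 2 * M * (INR (S n) ^ 2 * q ^ n)).
  - intros n. change (Rabs (Cmod (deriv_coeffs a n) * r ^ n) <= 2 * M * (INR (S n) ^ 2 * q ^ n)).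
    assert (Harn : 0 <= Cmod (a (S n)) * r ^ n)
      by (apply Rmult_le_pos; [apply Cmod_ge_0|apply pow_le; lra]).
    rewrite Rabs_pos_eq by (apply Rmult_le_pos; [apply Cmod_ge_0|apply pow_le; lra]).
    unfold deriv_coeffs. rewrite Cmod_mult, Cmod_R, (Rabs_pos_eq (INR _)) by apply pos_INR.
    destruct (Hb n) as [_ H2].
    assert (H1 : 1 <= INR (S n)) by (apply (le_INR 1); lia).
    assert (Hq0 : 0 <= q ^ n) by (apply pow_le; lra).
    assert (INR (S n) <= INR (S n) ^ 2)
      by (replace (INR (S n) ^ 2) with (INR (S n) * INR (S n)) by ring; nra).
    replace (INR (S n) * Cmod (a (S n)) * r ^ n) with (INR (S n) * (Cmod (a (S n)) * r ^ n)) by ring.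
    replace (2 * M * (INR (S n) ^ 2 * q ^ n)) with (INR (S n) ^ 2 * (2 * M * q ^ n)) by ring.
    apply Rmult_le_compat; lra.
  - apply (@ex_series_scal_l R_AbsRing R_NormedModule), ex_series_sq_geom, Hq.
Qed.

Lemma cderiv_of_quadratic_remainder (f : C -> C) (z D : C) (K delta : R) :
  0 < delta -> 0 <= K ->
  (forall h, Cmod h < delta -> Cmod (f (z + h) - f z - h * D)%C <= K * Cmod h ^ 2) ->
  cderiv f z D.
Proof.
  intros Hdelta HK Hrem.
  split; [apply is_linear_scal_l|].
  intros x Hx.
  apply (@is_filter_lim_locally_unique C_AbsRing (AbsRing_NormedModule C_AbsRing)) in Hx.
  subst x. intros eps.
  assert (Hd : 0 < Rmin delta (eps / (K + 1))).
  { apply Rmin_pos; [lra|]. apply Rdiv_lt_0_compat; [apply cond_pos|lra]. }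
  exists (mkposreal _ Hd). intros y Hy.
  change (Cmod (y - z)%C < Rmin delta (eps / (K + 1))) in Hy.
  change (Cmod ((f y - f z) - (y - z) * D)%C <= eps * Cmod (y - z)%C).
  pose proof (Rmin_l delta (eps / (K + 1))). pose proof (Rmin_r delta (eps / (K + 1))).
  specialize (Hrem (y - z)%C ltac:(lra)).
  assert (Ey : (z + (y - z))%C = y :> C) by ring.
  rewrite Ey in Hrem.
  set (h := Cmod (y - z)%C) in *.
  assert (Hh0 : 0 <= h) by apply Cmod_ge_0.
  assert (Hh : h * (K + 1) <= eps).
  { apply Rmult_le_reg_r with (/ (K + 1)); [apply Rinv_0_lt_compat; lra|].
    rewrite Rmult_assoc, Rinv_r by lra. lra. }
  simpl pow in Hrem. nra.
Qed.

Lemma power_term_remainder_le (an z h : C) (rho M q : R) (n : nat) :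
  1 / 2 <= rho -> Cmod z <= rho -> Cmod (z + h) <= rho -> 0 <= q ->
  Cmod an * rho ^ n <= M * q ^ n ->
  Cmod (an * (z + h) ^ n - an * z ^ n - h * (INR n * an * z ^ pred n))%C
  <= 2 * Cmod h ^ 2 * (M * (INR (S n) ^ 2 * q ^ n)).
Proof.
  intros Hrho Hz Hzh Hq Han.
  replace (an * (z + h) ^ n - an * z ^ n - h * (INR n * an * z ^ pred n))%C
    with (an * ((z + h) ^ n - z ^ n - INR n * h * z ^ pred n))%C by ring.
  rewrite Cmod_mult.
  pose proof (pow_remainder_le z h rho Hrho Hz Hzh n) as HE.
  assert (Hn : INR n ^ 2 <= INR (S n) ^ 2)
    by (apply pow_incr; split; [apply pos_INR|apply le_INR; lia]).
  assert (0 <= Cmod h ^ 2) by (apply pow_le, Cmod_ge_0).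
  assert (0 <= INR n ^ 2) by (apply pow_le, pos_INR).
  assert (0 <= q ^ n) by (apply pow_le; lra).
  assert (0 <= Cmod an * rho ^ n) by (apply Rmult_le_pos; [apply Cmod_ge_0|apply pow_le; lra]).
  eapply Rle_trans; [apply Rmult_le_compat_l; [apply Cmod_ge_0|exact HE]|].
  replace (Cmod an * (2 * INR n ^ 2 * Cmod h ^ 2 * rho ^ n))
    with (2 * Cmod h ^ 2 * (INR n ^ 2 * (Cmod an * rho ^ n))) by ring.
  replace (2 * Cmod h ^ 2 * (M * (INR (S n) ^ 2 * q ^ n)))
    with (2 * Cmod h ^ 2 * (INR (S n) ^ 2 * (M * q ^ n))) by ring.
  apply Rmult_le_compat_l; [lra|]. apply Rmult_le_compat; assumption.
Qed.

Lemma taylor_coeffs_quadratic_remainder (f : C -> C) (a : nat -> C) (z Dz : C) :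
  taylor_coeffs f a -> Cmod z < 1 ->
  is_Cseries (fun n => (deriv_coeffs a n * z ^ n)%C) Dz ->
  exists K delta, 0 < delta /\ 0 <= K /\ forall h, Cmod h < delta ->
    Cmod (f (z + h) - f z - h * Dz)%C <= K * Cmod h ^ 2.
Proof.
  intros Hf Hz HD.
  set (rho := (1 + Cmod z) / 2).
  assert (Hz0 : 0 <= Cmod z) by apply Cmod_ge_0.
  assert (Hrho : 1 / 2 <= rho < 1) by (unfold rho; lra).
  assert (Hzr : Cmod z < rho) by (unfold rho; lra).
  destruct (power_series_coeffs_decay a (taylor_coeffs_ex_series f a Hf) rho ltac:(lra))
    as [M [q [HM [Hq Hb]]]].
  set (b := fun n => M * (INR (S n) ^ 2 * q ^ n)).
  assert (Hb0 : forall n, 0 <= b n).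
  { intros n. apply Rmult_le_pos; [exact HM|].
    apply Rmult_le_pos; apply pow_le; [apply pos_INR|lra]. }
  assert (Hbs : is_series b (Series b)).
  { apply Series_correct, (@ex_series_scal_l R_AbsRing R_NormedModule), ex_series_sq_geom, Hq. }
  assert (HK : 0 <= Series b).
  { assert (Hincr : forall n, sum_n b n <= sum_n b (S n)).
    { intros n. rewrite sum_Sn. change (sum_n b n <= sum_n b n + b (S n)).
      pose proof (Hb0 (S n)). lra. }
    pose proof (is_lim_seq_incr_compare (sum_n b) (Series b) Hbs Hincr 0%nat) as Hle.
    rewrite sum_O in Hle. eapply Rle_trans; [apply Hb0|exact Hle]. }
  exists (2 * Series b), (rho - Cmod z). split; [lra|]. split; [lra|].
  intros h Hh.
  assert (Hzh : Cmod (z + h) <= rho) by (eapply Rle_trans; [apply Cmod_triangle|lra]).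
  set (g := fun n => (h * (INR n * a n * z ^ pred n))%C).
  assert (Hg : is_Cseries g (h * Dz)%C).
  { apply (@is_series_decr_1 C_AbsRing C_NormedModule).
    match goal with |- is_series _ ?L => replace L with (h * Dz)%C end.
    - exact (@is_series_scal_l C_AbsRing C_NormedModule h _ _ HD).
    - unfold g. simpl. change (h * Dz = h * Dz + - (h * (0 * a 0%nat * 1)))%C. ring. }
  pose proof (is_series_minus _ _ _ _
               (is_series_minus _ _ _ _ (Hf (z + h)%C ltac:(red; lra)) (Hf z Hz)) Hg) as Hdiff.
  replace (2 * Series b * Cmod h ^ 2) with (2 * Cmod h ^ 2 * Series b) by ring.
  apply (Cmod_series_le _ _ _ _ Hdiff
           (@is_series_scal_l R_AbsRing R_NormedModule (2 * Cmod h ^ 2) _ _ Hbs)).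
  intros n. cbv beta.
  change (Cmod ((a n * (z + h) ^ n - a n * z ^ n) - g n)%C <= 2 * Cmod h ^ 2 * b n).
  apply (power_term_remainder_le _ _ _ rho); [lra..|exact (proj1 (Hb n))].
Qed.

Lemma taylor_coeffs_cderiv (f : C -> C) (a : nat -> C) (z Dz : C) :
  taylor_coeffs f a -> Cmod z < 1 ->
  is_Cseries (fun n => (deriv_coeffs a n * z ^ n)%C) Dz -> cderiv f z Dz.
Proof.
  intros Hf Hz HD.
  destruct (taylor_coeffs_quadratic_remainder f a z Dz Hf Hz HD) as [K [delta [Hd [HK Hrem]]]].
  exact (cderiv_of_quadratic_remainder f z Dz K delta Hd HK Hrem).
Qed.

Fixpoint csum (f : nat -> C) (n : nat) : C :=
  match n with O => RtoC 0 | S n => (csum f n + f n)%C end.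

Lemma csum_ext (f g : nat -> C) (n : nat) :
  (forall k, (k < n)%nat -> f k = g k) -> csum f n = csum g n.
Proof. induction n; intros H; simpl; auto. rewrite IHn, H; auto. Qed.

Lemma csum_plus (f g : nat -> C) (n : nat) :
  csum (fun k => f k + g k)%C n = (csum f n + csum g n)%C.
Proof. induction n; simpl; [ring|]. rewrite IHn. ring. Qed.

Lemma csum_scal (c : C) (f : nat -> C) (n : nat) :
  csum (fun k => c * f k)%C n = (c * csum f n)%C.
Proof. induction n; simpl; [ring|]. rewrite IHn. ring. Qed.

Lemma csum_swap (F : nat -> nat -> C) (m N : nat) :
  csum (fun k => csum (fun n => F k n) m) N = csum (fun n => csum (fun k => F k n) N) m.
Proof.
  induction N; simpl.
  - induction m; simpl; auto. rewrite <- IHm. ring.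
  - rewrite IHN, <- csum_plus. reflexivity.
Qed.

Lemma csum_const (c : C) (N : nat) : csum (fun _ => c) N = (INR N * c)%C.
Proof. induction N; simpl csum; [simpl; ring|]. rewrite IHN, S_INR, RtoC_plus. ring. Qed.

Lemma csum_geom (w : C) (N : nat) : ((w - 1) * csum (fun k => w ^ k) N)%C = (w ^ N - 1)%C.
Proof.
  induction N; simpl csum; [simpl; ring|].
  rewrite Cmult_plus_distr_l, IHN, Cpow_S. ring.
Qed.

Lemma csum_supported_below_3 (f : nat -> C) (K : nat) :
  (forall n, (3 <= n)%nat -> f n = RtoC 0) -> csum f (K + 3) = (f 0%nat + f 1%nat + f 2%nat)%C.
Proof.
  intros H. induction K; [simpl; ring|].
  replace (S K + 3)%nat with (S (K + 3)) by lia.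
  simpl csum at 1. rewrite IHK, (H (K + 3)%nat) by lia. ring.
Qed.

Lemma csum_Re_lower (f : nat -> C) (B : R) (N : nat) :
  (forall k, (k < N)%nat -> B <= Re (f k)) -> INR N * B <= Re (csum f N).
Proof.
  induction N; intros H; simpl csum; [simpl; lra|].
  rewrite re_plus, S_INR.
  pose proof (H N ltac:(lia)). pose proof (IHN (fun k Hk => H k ltac:(lia))). lra.
Qed.

Lemma sum_n_csum (x : nat -> C) (M : nat) : @sum_n C_AbelianMonoid x M = csum x (S M).
Proof.
  induction M.
  - rewrite sum_O. simpl. change (x 0%nat = 0 + x 0%nat)%C. ring.
  - rewrite sum_Sn, IHM. reflexivity.
Qed.

Lemma Cmult_eq_0_cancel_l (u v : C) : u <> RtoC 0 -> (u * v)%C = RtoC 0 -> v = RtoC 0.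
Proof.
  intros Hu H. replace v with (/ u * (u * v))%C by (field; exact Hu).
  rewrite H. ring.
Qed.

Definition cis (t : R) : C := (cos t, sin t).

Lemma cis_mult (s t : R) : (cis s * cis t)%C = cis (s + t).
Proof. unfold cis, Cmult. simpl. rewrite cos_plus, sin_plus. f_equal; ring. Qed.

Lemma cis_pow (t : R) (n : nat) : (cis t ^ n)%C = cis (INR n * t).
Proof.
  induction n.
  - simpl. unfold cis. rewrite Rmult_0_l, cos_0, sin_0. reflexivity.
  - rewrite Cpow_S, IHn, cis_mult, S_INR. f_equal. ring.
Qed.

Lemma Cmod_cis (t : R) : Cmod (cis t) = 1.
Proof.
  unfold Cmod, cis. cbn [fst snd].
  replace (cos t ^ 2 + sin t ^ 2) with 1 by (rewrite <- (sin2_cos2 t); unfold Rsqr; ring).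
  apply sqrt_1.
Qed.

Definition unit_root (N : nat) : C := cis (2 * PI / INR N).

Lemma Cmod_unit_root_pow (N k : nat) : Cmod (unit_root N ^ k)%C = 1.
Proof. unfold unit_root. rewrite Cmod_pow, Cmod_cis. apply pow1. Qed.

Lemma unit_root_pow_N (N : nat) : (0 < N)%nat -> (unit_root N ^ N)%C = RtoC 1.
Proof.
  intros HN. unfold unit_root. rewrite cis_pow.
  replace (INR N * (2 * PI / INR N)) with (2 * PI) by (field; apply not_0_INR; lia).
  unfold cis. rewrite cos_2PI, sin_2PI. reflexivity.
Qed.

Lemma unit_root_pow_neq_1 (N m : nat) : (0 < m < N)%nat -> (unit_root N ^ m)%C <> RtoC 1.
Proof.
  intros Hm E. unfold unit_root in E. rewrite cis_pow in E. unfold cis in E.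
  injection E as Hc Hs.
  set (t := INR m * (2 * PI / INR N)) in *.
  assert (HN : 0 < INR N) by (apply lt_0_INR; lia).
  pose proof PI_RGT_0 as HPI.
  assert (Ht0 : 0 < t).
  { apply Rmult_lt_0_compat; [apply lt_0_INR; lia|apply Rdiv_lt_0_compat; lra]. }
  assert (Ht2 : t < 2 * PI).
  { assert (Hmn : INR m / INR N < 1)
      by (apply Rlt_div_l; [lra|rewrite Rmult_1_l; apply lt_INR; lia]).
    unfold t. replace (INR m * (2 * PI / INR N)) with (2 * PI * (INR m / INR N)) by (field; lra).
    nra. }
  destruct (Rtotal_order t PI) as [H|[H|H]].
  - pose proof (sin_gt_0 t Ht0 H). lra.
  - rewrite H, cos_PI in Hc. lra.
  - pose proof (sin_lt_0 t H Ht2). lra.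
Qed.

Lemma unit_roots_power_sum (N m : nat) : (0 < N)%nat -> (0 < m < 2 * N)%nat ->
  csum (fun k => (unit_root N ^ k) ^ m)%C N = if (m =? N)%nat then RtoC (INR N) else RtoC 0.
Proof.
  intros HN Hm.
  rewrite csum_ext with (g := fun k => ((unit_root N ^ m) ^ k)%C)
    by (intros k _; rewrite <- !Cpow_mult_r, Nat.mul_comm; reflexivity).
  destruct (Nat.eqb_spec m N) as [->|Hne].
  - rewrite unit_root_pow_N, csum_ext with (g := fun _ => RtoC 1) by (auto; intros; apply Cpow_1_l).
    rewrite csum_const. ring.
  - set (w := (unit_root N ^ m)%C).
    assert (HwN : (w ^ N)%C = RtoC 1).
    { unfold w. rewrite <- Cpow_mult_r, Nat.mul_comm, Cpow_mult_r, unit_root_pow_N by exact HN.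
      apply Cpow_1_l. }
    assert (Hw1 : w <> RtoC 1).
    { unfold w. destruct (Compare_dec.lt_dec m N) as [Hlt|Hge].
      - apply unit_root_pow_neq_1. lia.
      - replace m with (N + (m - N))%nat by lia.
        rewrite Cpow_add_r, unit_root_pow_N, Cmult_1_l by exact HN.
        apply unit_root_pow_neq_1. lia. }
    apply Cmult_eq_0_cancel_l with (w - 1)%C.
    + intros H. apply Hw1. apply Ceq_minus in H. exact H.
    + rewrite csum_geom, HwN. ring.
Qed.

Lemma Cconj_unit_root_pow (N k l : nat) : (0 < N)%nat -> (l <= N)%nat ->
  Cconj ((unit_root N ^ k) ^ l)%C = ((unit_root N ^ k) ^ (N - l))%C.
Proof.
  intros HN Hl.
  set (z := ((unit_root N ^ k) ^ l)%C).
  assert (Hz : Cmod z = 1) by (unfold z; rewrite Cmod_pow, Cmod_unit_root_pow; apply pow1).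
  assert (Hz0 : z <> RtoC 0) by (intros E; rewrite E, Cmod_0 in Hz; lra).
  assert (H1 : (Cconj z * z)%C = RtoC 1).
  { rewrite Cmult_comm, <- Cmod2_conj, Hz. simpl. f_equal; ring. }
  assert (H2 : ((unit_root N ^ k) ^ (N - l) * z)%C = RtoC 1).
  { unfold z. rewrite <- Cpow_add_r. replace (N - l + l)%nat with N by lia.
    rewrite <- !Cpow_mult_r, Nat.mul_comm, Cpow_mult_r, unit_root_pow_N by exact HN.
    apply Cpow_1_l. }
  replace (Cconj z) with (Cconj z * z * / z)%C by (field; exact Hz0).
  rewrite H1, <- H2. field. exact Hz0.
Qed.

Section TrigPoly.
Variables v0 v1 v2 : C.

Definition trig_poly (z : C) : C := (v0 + v1 * z + v2 * z ^ 2)%C.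

(* On the N-th roots of unity this polynomial agrees with the conjugate of [trig_poly]. *)
Definition trig_poly_reflected (N : nat) (z : C) : C :=
  (Cconj v0 * z ^ N + Cconj v1 * z ^ (N - 1) + Cconj v2 * z ^ (N - 2))%C.

Definition autocorr (n : nat) : C :=
  match n with
  | 0 => v0 * Cconj v0 + v1 * Cconj v1 + v2 * Cconj v2
  | 1 => v0 * Cconj v1 + v1 * Cconj v2
  | 2 => v0 * Cconj v2
  | _ => 0
  end%C.

Lemma trig_poly_reflected_unit_root (N k : nat) : (3 <= N)%nat ->
  trig_poly_reflected N (unit_root N ^ k)%C = Cconj (trig_poly (unit_root N ^ k)%C).
Proof.
  intros HN. set (z := (unit_root N ^ k)%C).
  assert (E0 : (z ^ N)%C = RtoC 1).
  { pose proof (Cconj_unit_root_pow N k 0 ltac:(lia) ltac:(lia)) as H.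
    rewrite Nat.sub_0_r in H. fold z in H. rewrite <- H.
    apply injective_projections; simpl; ring. }
  assert (E1 : Cconj z = (z ^ (N - 1))%C).
  { pose proof (Cconj_unit_root_pow N k 1 ltac:(lia) ltac:(lia)) as H.
    fold z in H. rewrite Cpow_1_r in H. exact H. }
  pose proof (Cconj_unit_root_pow N k 2 ltac:(lia) ltac:(lia)) as E2. fold z in E2.
  unfold trig_poly_reflected, trig_poly.
  rewrite !Cplus_conj, !Cmult_conj, E1, E2, E0. ring.
Qed.

Lemma Cmod_trig_poly_le (z : C) : Cmod z = 1 -> Cmod (trig_poly z) <= Cmod v0 + Cmod v1 + Cmod v2.
Proof.
  intros Hz. unfold trig_poly.
  eapply Rle_trans; [apply Cmod_triangle|].
  eapply Rle_trans; [apply Rplus_le_compat_r, Cmod_triangle|].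
  rewrite !Cmod_mult, Cmod_pow, Hz. simpl. lra.
Qed.

Lemma unit_roots_average_autocorr (N n : nat) : (n + 3 <= N)%nat ->
  csum (fun k => ((unit_root N ^ k) ^ n * trig_poly (unit_root N ^ k)
                  * trig_poly_reflected N (unit_root N ^ k))%C) N = (INR N * autocorr n)%C.
Proof.
  intros Hn.
  rewrite csum_ext with (g := fun k => let z := (unit_root N ^ k)%C in
    (v0 * Cconj v0 * z ^ (n + N) + v0 * Cconj v1 * z ^ (n + (N - 1))
     + v0 * Cconj v2 * z ^ (n + (N - 2))
     + v1 * Cconj v0 * z ^ (n + 1 + N) + v1 * Cconj v1 * z ^ (n + 1 + (N - 1))
     + v1 * Cconj v2 * z ^ (n + 1 + (N - 2))
     + v2 * Cconj v0 * z ^ (n + 2 + N) + v2 * Cconj v1 * z ^ (n + 2 + (N - 1))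
     + v2 * Cconj v2 * z ^ (n + 2 + (N - 2)))%C).
  2:{ intros k _. cbv zeta. unfold trig_poly, trig_poly_reflected. rewrite !Cpow_add_r.
      simpl (_ ^ 1)%C. ring. }
  cbv zeta. rewrite !csum_plus, !csum_scal, !unit_roots_power_sum by lia.
  destruct n as [|[|[|n]]]; simpl autocorr;
    repeat match goal with |- context [(?a =? ?b)%nat] =>
      destruct (Nat.eqb_spec a b); try lia end;
    ring.
Qed.
End TrigPoly.

Definition partial_sum (c : nat -> C) (M : nat) (z : C) : C := csum (fun n => c n * z ^ n)%C (S M).

Definition toeplitz_form (c : nat -> C) (r : R) (v0 v1 v2 : C) : C :=
  (c 0%nat * autocorr v0 v1 v2 0 + c 1%nat * r * autocorr v0 v1 v2 1
   + c 2%nat * (r * r) * autocorr v0 v1 v2 2)%C.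

Lemma unit_roots_average_partial_sum (c : nat -> C) (r : R) (v0 v1 v2 : C) (N M : nat) :
  (2 <= M)%nat -> (M + 3 <= N)%nat ->
  csum (fun k => partial_sum c M (r * unit_root N ^ k) * trig_poly v0 v1 v2 (unit_root N ^ k)
                 * trig_poly_reflected v0 v1 v2 N (unit_root N ^ k))%C N
  = (INR N * toeplitz_form c r v0 v1 v2)%C.
Proof.
  intros HM HN. unfold partial_sum.
  rewrite csum_ext with (g := fun k => csum (fun n => c n * r ^ n *
      ((unit_root N ^ k) ^ n * trig_poly v0 v1 v2 (unit_root N ^ k)
       * trig_poly_reflected v0 v1 v2 N (unit_root N ^ k)))%C (S M)).
  2:{ intros k _. rewrite <- Cmult_assoc, Cmult_comm, <- csum_scal.
      apply csum_ext. intros n _. rewrite Cpow_mult_l. ring. }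
  rewrite csum_swap.
  rewrite csum_ext with (g := fun n => (c n * r ^ n * (INR N * autocorr v0 v1 v2 n))%C)
    by (intros n Hn; rewrite csum_scal, unit_roots_average_autocorr by lia; reflexivity).
  replace (S M) with ((M - 2) + 3)%nat by lia.
  rewrite csum_supported_below_3.
  - unfold toeplitz_form. simpl. ring.
  - intros [|[|[|n]]] Hn; [lia..|]. simpl autocorr. ring.
Qed.

Lemma partial_sum_Re_lower (c : nat -> C) (r : R) :
  ex_series (fun n => Cmod (c n) * r ^ n) ->
  (forall z, Cmod z = r -> forall L, is_Cseries (fun n => (c n * z ^ n)%C) L -> 0 <= Re L) ->
  forall eps, 0 < eps ->
  exists M, (2 <= M)%nat /\ forall z, Cmod z = r -> - eps <= Re (partial_sum c M z).
Proof.
  intros [B HB] Hpos eps Heps.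
  destruct (HB (ball B (mkposreal eps Heps)) (locally_ball B _)) as [N0 HN0].
  exists (Nat.max N0 2). split; [lia|].
  set (M := Nat.max N0 2).
  intros z Hz.
  set (b := fun n => Cmod (c n) * r ^ n).
  assert (Hterm : forall n, Cmod (c n * z ^ n)%C = b n)
    by (intros n; unfold b; rewrite Cmod_mult, Cmod_pow, Hz; reflexivity).
  destruct (ex_Cseries_le (fun n => (c n * z ^ n)%C) b (fun n => Req_le _ _ (Hterm n))
              (ex_intro _ B HB)) as [L HL].
  set (S := sum_n (fun n => (c n * z ^ n)%C) M).
  assert (Htail : Cmod (L - S)%C <= B - sum_n b M).
  { apply (Cmod_series_le _ _ _ _ (@is_series_tail C_AbsRing C_NormedModule _ _ M HL)
                                  (@is_series_tail R_AbsRing R_NormedModule _ _ M HB)).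
    intros n. destruct (n <=? M)%nat.
    - exact (Req_le _ _ Cmod_0).
    - rewrite Hterm. apply Rle_refl. }
  assert (HBM : Rabs (sum_n b M - B) < eps) by exact (HN0 M ltac:(unfold M; lia)).
  pose proof (Hpos z Hz L HL).
  pose proof (re_le_Cmod (L - S)%C) as Hre. apply Rabs_le_between in Hre.
  apply Rabs_def2 in HBM.
  unfold partial_sum. rewrite <- sum_n_csum. fold S.
  replace (Re S) with (Re L - Re (L - S)%C) by (unfold Cminus; rewrite re_plus, re_opp; ring).
  lra.
Qed.

(* Average the truncated series at r z against |trig_poly z|^2 over the N-th roots of unity,
   N = M + 3: the average is N times the form, and every term is almost nonnegative. *)
Lemma toeplitz_form_Re_lower (c : nat -> C) (r : R) (v0 v1 v2 : C) :
  0 <= r -> ex_series (fun n => Cmod (c n) * r ^ n) ->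
  (forall z, Cmod z = r -> forall L, is_Cseries (fun n => (c n * z ^ n)%C) L -> 0 <= Re L) ->
  forall eps, 0 < eps ->
  - eps * (Cmod v0 + Cmod v1 + Cmod v2) ^ 2 <= Re (toeplitz_form c r v0 v1 v2).
Proof.
  intros Hr Hex Hpos eps Heps.
  set (W := Cmod v0 + Cmod v1 + Cmod v2).
  assert (HW : 0 <= W) by (unfold W; pose proof (Cmod_ge_0 v0);
                           pose proof (Cmod_ge_0 v1); pose proof (Cmod_ge_0 v2); lra).
  destruct (partial_sum_Re_lower c r Hex Hpos eps Heps) as [M [HM HP]].
  set (N := (M + 3)%nat).
  assert (HN : 0 < INR N) by (apply lt_0_INR; unfold N; lia).
  apply Rmult_le_reg_l with (INR N); [exact HN|].
  rewrite <- re_scal_l, <- (unit_roots_average_partial_sum c r v0 v1 v2 N M HM ltac:(unfold N; lia)).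
  apply csum_Re_lower. intros k _.
  rewrite trig_poly_reflected_unit_root by (unfold N; lia).
  set (z := (unit_root N ^ k)%C).
  set (V := trig_poly v0 v1 v2 z).
  rewrite <- Cmult_assoc, <- Cmod2_conj, re_scal_r.
  assert (Hz1 : Cmod z = 1) by apply Cmod_unit_root_pow.
  assert (Hmod : Cmod (r * z)%C = r) by (rewrite Cmod_mult, Cmod_R, Hz1, Rabs_pos_eq; lra).
  pose proof (HP _ Hmod).
  assert (HV : Cmod V <= W) by (apply Cmod_trig_poly_le, Hz1).
  pose proof (Cmod_ge_0 V).
  assert (Cmod V ^ 2 <= W ^ 2) by (apply pow_incr; lra).
  assert (0 <= Cmod V ^ 2) by (apply pow_le; lra).
  nra.
Qed.

Lemma toeplitz_form_nonneg (c : nat -> C) (r : R) (v0 v1 v2 : C) :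
  0 <= r -> ex_series (fun n => Cmod (c n) * r ^ n) ->
  (forall z, Cmod z = r -> forall L, is_Cseries (fun n => (c n * z ^ n)%C) L -> 0 <= Re L) ->
  0 <= Re (toeplitz_form c r v0 v1 v2).
Proof.
  intros Hr Hex Hpos.
  set (W2 := (Cmod v0 + Cmod v1 + Cmod v2) ^ 2).
  assert (HW2 : 0 <= W2) by (apply pow2_ge_0).
  apply Rle_plus_epsilon. intros eps Heps.
  assert (Heps' : 0 < eps / (W2 + 1)) by (apply Rdiv_lt_0_compat; lra).
  pose proof (toeplitz_form_Re_lower c r v0 v1 v2 Hr Hex Hpos _ Heps') as H.
  fold W2 in H.
  assert (eps / (W2 + 1) * W2 <= eps).
  { apply Rmult_le_reg_r with (W2 + 1); [lra|].
    replace (eps / (W2 + 1) * W2 * (W2 + 1)) with (eps * W2) by (field; lra). nra. }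
  lra.
Qed.

Lemma unit_vector_attains_norm (x y : R) :
  exists al be, al * al + be * be = 1 /\ al * x + be * y = sqrt (x * x + y * y).
Proof.
  set (n := sqrt (x * x + y * y)).
  assert (Hn2 : n * n = x * x + y * y) by (apply sqrt_sqrt; nra).
  destruct (Req_dec n 0) as [Hn0|Hn0].
  - exists 1, 0. split; [ring|]. rewrite Hn0 in Hn2. fold n. rewrite Hn0. nra.
  - exists (x / n), (y / n). split.
    + replace (x / n * (x / n) + y / n * (y / n)) with ((x * x + y * y) / (n * n)) by (field; lra).
      rewrite Hn2. field. intros H. apply Hn0. nra.
    + replace (x / n * x + y / n * y) with ((x * x + y * y) / n) by (field; lra).
      rewrite <- Hn2. field. exact Hn0.
Qed.

(* The middle component minimises the form for fixed v0 = 1 and v2 = -u. *)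
Lemma Re_toeplitz_form_test_vector (c : nat -> C) (p q s t r al be : R) :
  c 0%nat = RtoC 1 -> c 1%nat = (p, q) -> c 2%nat = (s, t) ->
  let T := ((p, q) * RtoC r)%C in
  let u := (al, be) : C in
  Re (toeplitz_form c r (RtoC 1) (RtoC (- / 2) * (T - Cconj T * u)) (- u))%C
  = 2 - r * r * (p * p + q * q) / 2
    - (al * (r * r * s - r * r * (p * p - q * q) / 2) + be * (r * r * t - r * r * p * q))
    - (1 - (al * al + be * be)) * (1 - r * r * (p * p + q * q) / 4).
Proof.
  intros H0 H1 H2 T u. unfold toeplitz_form, autocorr. rewrite H0, H1, H2.
  unfold T, u, Cconj, Cmult, Cplus, Copp, Cminus, RtoC. simpl. field.
Qed.

Lemma le_of_forall_sq_scaled_le (K B : R) : 0 < B ->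
  (forall r, 0 < r < 1 -> r * r * K <= B) -> K <= B.
Proof.
  intros HB H. destruct (Rle_or_lt K B) as [H1|H1]; [exact H1|exfalso].
  set (r2 := (1 + B / K) / 2).
  assert (HBK : 0 < B / K < 1) by (split; [apply Rdiv_lt_0_compat|apply Rlt_div_l]; lra).
  assert (Hr2 : 0 < r2 < 1) by (unfold r2; lra).
  assert (Hr : 0 < sqrt r2 < 1).
  { split; [apply sqrt_lt_R0; lra|]. rewrite <- sqrt_1. apply sqrt_lt_1; lra. }
  specialize (H (sqrt r2) Hr). rewrite sqrt_sqrt in H by lra.
  unfold r2 in H. replace ((1 + B / K) / 2 * K) with ((K + B) / 2) in H by (field; lra). lra.
Qed.

Lemma carath_fekete_szego (c : nat -> C) : c 0%nat = RtoC 1 ->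
  (forall r, 0 < r < 1 -> forall v0 v1 v2, 0 <= Re (toeplitz_form c r v0 v1 v2)) ->
  Cmod (c 2%nat - RtoC (/ 2) * (c 1%nat * c 1%nat))%C + Cmod (c 1%nat) ^ 2 / 2 <= 2.
Proof.
  intros Hc0 HT.
  destruct (c 1%nat) as [p q] eqn:Ec1. destruct (c 2%nat) as [s t] eqn:Ec2.
  set (E1 := s - (p * p - q * q) / 2). set (E2 := t - p * q).
  assert (HE : Cmod ((s, t) - RtoC (/ 2) * ((p, q) * (p, q)))%C = sqrt (E1 * E1 + E2 * E2)).
  { unfold Cmod. f_equal. unfold E1, E2, Cminus, Cplus, Copp, Cmult, RtoC. simpl. field. }
  assert (Hp : Cmod (p, q) ^ 2 = p * p + q * q) by (rewrite Cmod2_alt; simpl; ring).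
  rewrite HE, Hp.
  destruct (unit_vector_attains_norm E1 E2) as [al [be [Hab Hdot]]].
  cut (sqrt (E1 * E1 + E2 * E2) + (p * p + q * q) / 2 <= 2); [lra|].
  apply le_of_forall_sq_scaled_le; [lra|]. intros r Hr.
  pose proof (HT r Hr (RtoC 1) (RtoC (- / 2) * ((p, q) * RtoC r
                  - Cconj ((p, q) * RtoC r) * (al, be)))%C (- (al, be))%C) as H.
  rewrite (Re_toeplitz_form_test_vector c p q s t r al be Hc0 Ec1 Ec2), Hab in H.
  rewrite <- Hdot. unfold E1, E2. nra.
Qed.

Lemma classR_deriv_coeffs_bound (f : C -> C) (a : nat -> C) : classR f -> taylor_coeffs f a ->
  let c := deriv_coeffs a in
  Cmod (c 2%nat - RtoC (/ 2) * (c 1%nat * c 1%nat))%C + Cmod (c 1%nat) ^ 2 / 2 <= 2.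
Proof.
  intros [[_ [_ Hd0]] HR] Hf c.
  apply carath_fekete_szego.
  - assert (H0 : Cmod (RtoC 0) < 1) by (rewrite Cmod_0; lra).
    pose proof (taylor_coeffs_cderiv f a _ _ Hf H0 (is_Cseries_at_0 c)) as H.
    apply is_C_derive_unique in H. apply is_C_derive_unique in Hd0. congruence.
  - intros r Hr v0 v1 v2.
    apply toeplitz_form_nonneg; [lra|apply (deriv_coeffs_abs_summable f a Hf); lra|].
    intros z Hz L HL.
    assert (Hz1 : Cmod z < 1) by lra.
    left. exact (HR z L Hz1 (taylor_coeffs_cderiv f a z L Hf Hz1 HL)).
Qed.

Lemma inverse_coeffs_diff_bounds_real (X e A3 : R) : 0 <= X -> 0 <= e -> e + 2 * X * X <= 2 ->
  0 <= A3 -> 4 / 3 * (X * X) - e / 3 <= A3 <= 4 / 3 * (X * X) + e / 3 ->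
  - (1 / sqrt 3) <= A3 - X <= 2 / 3.
Proof.
  intros HX He H HA0 [HA1 HA2].
  assert (Hs3 : sqrt 3 * sqrt 3 = 3) by (apply sqrt_sqrt; lra).
  assert (Hs0 : 0 < sqrt 3) by (apply sqrt_lt_R0; lra).
  set (s := 1 / sqrt 3).
  assert (Hs : 0 < s) by (unfold s; apply Rdiv_lt_0_compat; lra).
  assert (Hss : s * s = 1 / 3).
  { unfold s. replace (1 / sqrt 3 * (1 / sqrt 3)) with (1 / (sqrt 3 * sqrt 3)) by (field; lra).
    rewrite Hs3. reflexivity. }
  split; [|nra].
  destruct (Rle_or_lt X s); [lra|].
  assert (1 / 2 < s) by nra. nra.
Qed.

Lemma classR_inverse_coeffs_diff_bounds (f : C -> C) (a : nat -> C) :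
  classR f -> taylor_coeffs f a -> - (1 / sqrt 3) <= Cmod (invA3 a) - Cmod (invA2 a) <= 2 / 3.
Proof.
  intros HR Hf.
  pose proof (classR_deriv_coeffs_bound f a HR Hf) as H. cbv zeta in H. unfold deriv_coeffs in H.
  set (E := (INR 3 * a 3%nat - RtoC (/ 2) * (INR 2 * a 2%nat * (INR 2 * a 2%nat)))%C) in H.
  set (X := Cmod (a 2%nat)).
  assert (Hc1 : Cmod (INR 2 * a 2%nat)%C = 2 * X)
    by (rewrite Cmod_mult, Cmod_R, Rabs_pos_eq by apply pos_INR; unfold X; simpl; ring).
  assert (HA3 : invA3 a = (RtoC (- / 3) * E + RtoC (4 / 3) * (a 2%nat * a 2%nat))%C).
  { unfold invA3, E. simpl INR. rewrite !RtoC_plus. apply injective_projections; simpl; field. }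
  assert (HA2 : Cmod (invA2 a) = X) by apply Cmod_opp.
  assert (HX2 : Cmod (RtoC (4 / 3) * (a 2%nat * a 2%nat))%C = 4 / 3 * (X * X))
    by (rewrite !Cmod_mult, Cmod_R, Rabs_pos_eq by lra; reflexivity).
  assert (HEm : Cmod (RtoC (- / 3) * E)%C = Cmod E / 3)
    by (rewrite Cmod_mult, Cmod_R, Rabs_left by lra; field).
  rewrite HA2. apply (inverse_coeffs_diff_bounds_real X (Cmod E)).
  - apply Cmod_ge_0.
  - apply Cmod_ge_0.
  - rewrite Hc1 in H. lra.
  - apply Cmod_ge_0.
  - rewrite HA3, <- HX2, <- HEm. split.
    + pose proof (Cmod_triangle (RtoC (- / 3) * E + RtoC (4 / 3) * (a 2%nat * a 2%nat))%C
                                (- (RtoC (- / 3) * E))%C) as Ht.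
      rewrite Cmod_opp in Ht.
      replace (RtoC (- / 3) * E + RtoC (4 / 3) * (a 2%nat * a 2%nat) + - (RtoC (- / 3) * E))%C
        with (RtoC (4 / 3) * (a 2%nat * a 2%nat))%C in Ht by ring.
      lra.
    + rewrite Rplus_comm. apply Cmod_triangle.
Qed.

Lemma C_geom_series (z : C) : Cmod z < 1 -> is_Cseries (fun n => (z ^ n)%C) (/ (1 - z))%C.
Proof.
  intros Hz.
  assert (Hz1 : (1 - z)%C <> RtoC 0).
  { intros E. apply Ceq_minus in E. subst z. rewrite Cmod_1 in Hz. lra. }
  assert (Hc : 0 < Cmod (1 - z)%C) by (apply Cmod_gt_0; exact Hz1).
  assert (Hpart : forall n, (@sum_n C_AbelianMonoid (fun k => (z ^ k)%C) n
                             - / (1 - z) = - (z ^ S n / (1 - z)))%C).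
  { intros n. rewrite sum_n_csum.
    apply (proj2 (Ceq_minus _ _)). apply Cmult_eq_0_cancel_l with (1 - z)%C; [exact Hz1|].
    replace ((1 - z) * (csum (fun k => (z ^ k)%C) (S n) - / (1 - z) - - (z ^ S n / (1 - z))))%C
      with (- ((z - 1) * csum (fun k => (z ^ k)%C) (S n)) - (1 - z ^ S n))%C by (field; exact Hz1).
    rewrite csum_geom. ring. }
  intros P [eps HP].
  pose proof (is_lim_seq_geom (Cmod z) ltac:(rewrite Rabs_pos_eq by apply Cmod_ge_0; lra)) as Hg.
  destruct (Hg (ball 0 (mkposreal _ (Rmult_lt_0_compat _ _ (cond_pos eps) Hc))) (locally_ball _ _))
    as [N HN].
  exists N. intros n Hn. apply HP, C_NormedModule_mixin_compat1.
  change (Cmod (@sum_n C_AbelianMonoid (fun k => (z ^ k)%C) n - / (1 - z))%C < eps).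
  rewrite Hpart, Cmod_opp, Cmod_div, Cmod_pow by exact Hz1.
  specialize (HN (S n) ltac:(lia)).
  change (Rabs (Cmod z ^ S n - 0) < eps * Cmod (1 - z)%C) in HN.
  rewrite Rminus_0_r, Rabs_pos_eq in HN by (apply pow_le, Cmod_ge_0).
  apply Rlt_div_l; assumption.
Qed.

Lemma ex_Cseries_bounded_coeffs (x : nat -> C) (B : R) (z : C) :
  (forall n, Cmod (x n) <= B) -> Cmod z < 1 -> ex_Cseries (fun n => (x n * z ^ n)%C).
Proof.
  intros Hx Hz. apply ex_Cseries_le with (fun n => B * Cmod z ^ n).
  - intros n. rewrite Cmod_mult, Cmod_pow.
    apply Rmult_le_compat_r; [apply pow_le, Cmod_ge_0|apply Hx].
  - apply (@ex_series_scal_l R_AbsRing R_NormedModule), ex_series_geom.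
    rewrite Rabs_pos_eq by apply Cmod_ge_0. exact Hz.
Qed.

Lemma Re_Cinv_gt_half (w : C) : Cmod (1 - w)%C < 1 -> 1 / 2 < Re (/ w)%C.
Proof.
  destruct w as [x y]. intros H.
  assert (H2 : Cmod (1 - (x, y))%C ^ 2 < 1) by (pose proof (Cmod_ge_0 (1 - (x, y))%C); nra).
  rewrite Cmod2_alt in H2. simpl in H2.
  unfold Cinv. simpl.
  assert (Hpos : 0 < x * x + y * y) by nra.
  replace (x * (x * 1) + y * (y * 1)) with (x * x + y * y) by ring.
  apply Rmult_lt_reg_r with (x * x + y * y); [exact Hpos|].
  replace (x / (x * x + y * y) * (x * x + y * y)) with x by (field; lra). nra.
Qed.

(* Extremal functions: f' = al / (1 - z) + be / (1 + z) - 1 with al, be >= 0, al + be = 2. *)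
Section Extremal.
Variables al be : R.
Hypotheses (Hal : 0 <= al) (Hbe : 0 <= be) (Hsum : al + be = 2).

Definition extremal_deriv_coeffs (n : nat) : C :=
  RtoC (al + be * (-1) ^ n - (if (n =? 0)%nat then 1 else 0)).

Definition extremal_coeffs (n : nat) : C :=
  match n with
  | O => RtoC 0
  | S m => (RtoC (/ INR (S m)) * extremal_deriv_coeffs m)%C
  end.

(* The sum of the series on the disk; its value elsewhere is irrelevant. *)
Definition extremal_fun (z : C) : C :=
  epsilon (inhabits (RtoC 0)) (is_Cseries (fun n => (extremal_coeffs n * z ^ n)%C)).

Definition extremal_deriv (z : C) : C := (RtoC al * / (1 - z) + RtoC be * / (1 - - z) - 1)%C.

Lemma Cmod_extremal_deriv_coeffs_le (n : nat) : Cmod (extremal_deriv_coeffs n) <= 3.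
Proof.
  unfold extremal_deriv_coeffs. rewrite Cmod_R.
  assert (Hp : Rabs ((-1) ^ n) = 1) by (rewrite <- RPow_abs, Rabs_m1; apply pow1).
  assert (Hind : Rabs (if (n =? 0)%nat then 1 else 0) <= 1)
    by (destruct (n =? 0)%nat; [rewrite Rabs_R1|rewrite Rabs_R0]; lra).
  unfold Rminus. eapply Rle_trans; [apply Rabs_triang|]. rewrite Rabs_Ropp.
  eapply Rle_trans; [apply Rplus_le_compat_r, Rabs_triang|].
  rewrite Rabs_mult, Hp, (Rabs_pos_eq al), (Rabs_pos_eq be) by lra. lra.
Qed.

Lemma Cmod_extremal_coeffs_le (n : nat) : Cmod (extremal_coeffs n) <= 3.
Proof.
  destruct n as [|m]; cbn [extremal_coeffs]; [rewrite Cmod_0; lra|].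
  rewrite Cmod_mult, Cmod_R.
  assert (H1 : 1 <= INR (S m)) by (apply (le_INR 1); lia).
  assert (Hinv : 0 < / INR (S m) <= 1).
  { split; [apply Rinv_0_lt_compat; lra|rewrite <- Rinv_1; apply Rinv_le_contravar; lra]. }
  rewrite Rabs_pos_eq by lra.
  pose proof (Cmod_extremal_deriv_coeffs_le m). pose proof (Cmod_ge_0 (extremal_deriv_coeffs m)).
  nra.
Qed.

Lemma deriv_coeffs_extremal (n : nat) :
  deriv_coeffs extremal_coeffs n = extremal_deriv_coeffs n.
Proof.
  unfold deriv_coeffs. cbn [extremal_coeffs].
  rewrite Cmult_assoc, <- RtoC_mult, Rinv_r by (apply not_0_INR; discriminate).
  apply Cmult_1_l.
Qed.

Lemma extremal_taylor_coeffs : taylor_coeffs extremal_fun extremal_coeffs.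
Proof.
  intros z Hz. unfold extremal_fun. apply epsilon_spec.
  exact (ex_Cseries_bounded_coeffs _ 3 z Cmod_extremal_coeffs_le Hz).
Qed.

Lemma extremal_deriv_series (z : C) : Cmod z < 1 ->
  is_Cseries (fun n => (deriv_coeffs extremal_coeffs n * z ^ n)%C) (extremal_deriv z).
Proof.
  intros Hz.
  assert (Hz' : Cmod (- z)%C < 1) by (rewrite Cmod_opp; exact Hz).
  pose proof (@is_series_truncated C_AbsRing C_NormedModule (fun _ => RtoC 1) 0) as H1.
  rewrite sum_O in H1.
  pose proof (is_series_minus _ _ _ _ (is_series_plus _ _ _ _
    (@is_series_scal_l C_AbsRing C_NormedModule (RtoC al) _ _ (C_geom_series z Hz))
    (@is_series_scal_l C_AbsRing C_NormedModule (RtoC be) _ _ (C_geom_series (- z)%C Hz'))) H1)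
    as H.
  eapply is_series_ext; [|exact H].
  intros n. rewrite deriv_coeffs_extremal. unfold extremal_deriv_coeffs.
  change (RtoC al * z ^ n + RtoC be * (- z) ^ n - (if (n <=? 0)%nat then RtoC 1 else RtoC 0)
          = RtoC (al + be * (-1) ^ n - (if (n =? 0)%nat then 1 else 0)) * z ^ n)%C.
  replace (- z)%C with (RtoC (-1) * z)%C by ring.
  rewrite Cpow_mult_l, <- RtoC_pow.
  destruct n; simpl; rewrite !RtoC_minus, !RtoC_plus, !RtoC_mult; ring.
Qed.

Lemma Re_extremal_deriv_pos (z : C) : Cmod z < 1 -> 0 < Re (extremal_deriv z).
Proof.
  intros Hz. unfold extremal_deriv, Cminus.
  rewrite !re_plus, re_opp, !re_scal_l.
  assert (H1 : 1 / 2 < Re (/ (1 - z))%C)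
    by (apply Re_Cinv_gt_half; replace (1 - (1 - z))%C with z by ring; exact Hz).
  assert (H2 : 1 / 2 < Re (/ (1 - - z))%C)
    by (apply Re_Cinv_gt_half; replace (1 - (1 - - z))%C with (- z)%C by ring;
        rewrite Cmod_opp; exact Hz).
  unfold Cminus in H1, H2. simpl (Re (RtoC 1)).
  set (R1 := Re (/ (1 + - z))%C) in *. set (R2 := Re (/ (1 + - - z))%C) in *.
  assert (0 <= al * (R1 - 1 / 2)) by (apply Rmult_le_pos; lra).
  assert (0 <= be * (R2 - 1 / 2)) by (apply Rmult_le_pos; lra).
  destruct (Rle_lt_dec al 0).
  - replace be with 2 by lra. lra.
  - assert (0 < al * (R1 - 1 / 2)) by (apply Rmult_lt_0_compat; lra). lra.
Qed.

Lemma extremal_classR : classR extremal_fun.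
Proof.
  assert (H0 : Cmod (RtoC 0) < 1) by (rewrite Cmod_0; lra).
  assert (Hderiv : forall z, Cmod z < 1 -> cderiv extremal_fun z (extremal_deriv z))
    by (intros z Hz; exact (taylor_coeffs_cderiv _ _ z _ extremal_taylor_coeffs Hz
                              (extremal_deriv_series z Hz))).
  split; [split; [|split]|].
  - intros z Hz. exists (extremal_deriv z). exact (Hderiv z Hz).
  - exact (is_Cseries_unique _ _ _ (extremal_taylor_coeffs _ H0) (is_Cseries_at_0 _)).
  - pose proof (taylor_coeffs_cderiv _ _ _ _ extremal_taylor_coeffs H0
                  (is_Cseries_at_0 (deriv_coeffs extremal_coeffs))) as H.
    rewrite deriv_coeffs_extremal in H. unfold extremal_deriv_coeffs in H. simpl in H.
    now replace (al + be * 1 - 1) with 1 in H by lra.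
  - intros z l Hz Hl.
    apply is_C_derive_unique in Hl. rewrite <- Hl, (is_C_derive_unique _ _ _ (Hderiv z Hz)).
    exact (Re_extremal_deriv_pos z Hz).
Qed.

Lemma extremal_inverse_coeffs_diff :
  Cmod (invA3 extremal_coeffs) - Cmod (invA2 extremal_coeffs)
  = Rabs (- 2 / 3 + (al - be) ^ 2 / 2) - Rabs ((al - be) / 2).
Proof.
  assert (HA2 : invA2 extremal_coeffs = RtoC (- ((al - be) / 2))).
  { unfold invA2, extremal_coeffs, extremal_deriv_coeffs. simpl.
    apply injective_projections; simpl; field. }
  assert (HA3 : invA3 extremal_coeffs = RtoC (- 2 / 3 + (al - be) ^ 2 / 2)).
  { unfold invA3, extremal_coeffs, extremal_deriv_coeffs. simpl.
    replace be with (2 - al) by lra. apply injective_projections; simpl; field. }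
  rewrite HA2, HA3, !Cmod_R, Rabs_Ropp. reflexivity.
Qed.
End Extremal.

Lemma exists_classR_inverse_coeffs_diff (al be : R) : 0 <= al -> 0 <= be -> al + be = 2 ->
  exists (f : C -> C) (a : nat -> C), classR f /\ taylor_coeffs f a /\
    Cmod (invA3 a) - Cmod (invA2 a) = Rabs (- 2 / 3 + (al - be) ^ 2 / 2) - Rabs ((al - be) / 2).
Proof.
  intros Hal Hbe Hsum. exists (extremal_fun al be), (extremal_coeffs al be).
  split; [exact (extremal_classR al be Hal Hbe Hsum)|].
  split; [apply extremal_taylor_coeffs; assumption|].
  exact (extremal_inverse_coeffs_diff al be Hsum).
Qed.

Theorem mainTheorem10 :
  (forall (f : C -> C) (a : nat -> C),
      classR f -> taylor_coeffs f a ->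
      - (1 / sqrt 3) <= Cmod (invA3 a) - Cmod (invA2 a) <= 2 / 3)
  /\ (exists (f : C -> C) (a : nat -> C),
        classR f /\ taylor_coeffs f a /\
        Cmod (invA3 a) - Cmod (invA2 a) = - (1 / sqrt 3))
  /\ (exists (f : C -> C) (a : nat -> C),
        classR f /\ taylor_coeffs f a /\
        Cmod (invA3 a) - Cmod (invA2 a) = 2 / 3).
Proof.
  split; [exact classR_inverse_coeffs_diff_bounds|split].
  - set (s := 1 / sqrt 3).
    assert (Hs0 : 0 < sqrt 3) by (apply sqrt_lt_R0; lra).
    assert (Hs : 0 < s) by (apply Rdiv_lt_0_compat; lra).
    assert (Hss : s * s = 1 / 3)
      by (unfold s; rewrite <- (sqrt_sqrt 3) at 3 by lra; field; lra).
    destruct (exists_classR_inverse_coeffs_diff (1 + s) (1 - s) ltac:(lra) ltac:(nra) ltac:(lra))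
      as [f [a [HR [Ha Hdiff]]]].
    exists f, a. do 2 (split; [assumption|]). rewrite Hdiff.
    replace (- 2 / 3 + (1 + s - (1 - s)) ^ 2 / 2) with 0 by (simpl; nra).
    replace ((1 + s - (1 - s)) / 2) with s by field.
    rewrite Rabs_R0, Rabs_pos_eq by lra. ring.
  - destruct (exists_classR_inverse_coeffs_diff 1 1 ltac:(lra) ltac:(lra) ltac:(lra))
      as [f [a [HR [Ha Hdiff]]]].
    exists f, a. do 2 (split; [assumption|]). rewrite Hdiff.
    replace (- 2 / 3 + (1 - 1) ^ 2 / 2) with (- (2 / 3)) by field.
    replace ((1 - 1) / 2) with 0 by field.
    rewrite Rabs_R0, Rabs_Ropp, Rabs_pos_eq by lra. ring.
Qed.
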